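(* Fix a token $\texttt{<x>}\in\mathsf{Voc}$, an integer $\ell\ge0$, a length $T\ge1$ with $M\ge T$, and $\varepsilon\in(0,1)$. There exist matrices $\mathbf{K},\mathbf{Q}\in\mathbb{R}^{d\times d}$ such that for every sequence $(\mathbf{h}_1,\dots,\mathbf{h}_T)$ with $\mathbf{h}_i=[\tilde{\mathbf{h}}_i^\top,1,0]^\top$ satisfying (i) $\tilde{\mathbf{h}}_i=\sum_{v\in\mathsf{Voc}}\lambda_{i,v}\tilde{\mathbf{u}}_v$ with $\lambda_{i,v}\ge0$ and $\sum_v\lambda_{i,v}^2=1$ for all $i$, (ii) $\langle\tilde{\mathbf{u}}_{\texttt{<x>}},\tilde{\mathbf{h}}_i\rangle\in\{0,1\}$ for all $i$, and (iii) $\langle\tilde{\mathbf{u}}_{\texttt{<x>}},\tilde{\mathbf{h}}_i\rangle=0$ for $i\le\ell$, it holds for every $i\in[T]$: if $\langle\tilde{\mathbf{h}}_i,\tilde{\mathbf{u}}_{\texttt{<x>}}\rangle=1$ then $s_{i,i-\ell}>1-\varepsilon$, and otherwise $s_{i,1}>1-\varepsilon$, where $s_{i,\cdot}=\mathsf{SoftMax}(\langle\mathbf{q}_i,\mathbf{k}_1\rangle,\dots,\langle\mathbf{q}_i,\mathbf{k}_i\rangle)$ with the rotary queries and keys $\mathbf{q}_j=\mathbf{R}^{(j)}\mathbf{Q}\mathbf{h}_j$, $\mathbf{k}_j=\mathbf{R}^{(j)}\mathbf{K}\mathbf{h}_j$.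
   Context: Vocabulary $\mathsf{Voc}=\{1,\dots,V\}$. Dimension $d=d_\mathsf{TE}+2$ with $d$ and $d_\mathsf{TE}$ even; vectors $\tilde{\mathbf{u}}_v\in\mathbb{R}^{d_\mathsf{TE}}$, $v\in\mathsf{Voc}$, are orthonormal, and token embeddings are $\mathbf{u}_v=[\tilde{\mathbf{u}}_v^\top,0,0]^\top$. Rotary position embedding: $M>0$ is a fixed large integer, $\omega=M^{-2/d}$; for integer $i$ and $k\in\{1,\dots,d/2\}$, $\mathbf{R}^{(i,k)}=\begin{bmatrix}\cos(i\omega^k)&-\sin(i\omega^k)\\ \sin(i\omega^k)&\cos(i\omega^k)\end{bmatrix}$ and $\mathbf{R}^{(i)}=\mathrm{diag}(\mathbf{R}^{(i,1)},\dots,\mathbf{R}^{(i,d/2)})\in\mathbb{R}^{d\times d}$. $\mathsf{SoftMax}(\boldsymbol{x})_j=e^{x_j}/\sum_k e^{x_k}$. *)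

From HB Require Import structures.
From mathcomp Require Import all_boot all_order all_algebra.
From mathcomp Require Import all_classical all_reals all_analysis.
Set Implicit Arguments. Unset Strict Implicit. Unset Printing Implicit Defensive.
Import Order.TTheory GRing.Theory Num.Theory.
Local Open Scope ring_scope.

Definition dotv {R : realType} {n : nat} (u v : 'cV[R]_n) : R :=
  \sum_(k < n) u k 0 * v k 0.

Definition rope_omega {R : realType} (M d : nat) : R :=
  powR (M%:R) (- (2%:R / d%:R)).

(* Rotary matrix R^(i) in R^{d x d}: block diagonal, the p-th 2x2 block
   (0-based p, rows/cols 2p,2p+1) is the rotation by angle i * omega^(p+1),
   i.e. the block k = p+1 of the paper. *)
Definition rope {R : realType} (M d : nat) (i : nat) : 'M[R]_d :=
  \matrix_(a < d, b < d)
    if (a./2 == b./2)%N then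
      let th := i%:R * (rope_omega M d) ^+ (a./2).+1 in
      if odd a == odd b then cos th
      else if odd a then sin th else - sin th
    else 0.

Definition embed_h {R : realType} {dTE : nat} (ht : 'cV[R]_dTE) : 'cV[R]_(dTE + 2) :=
  col_mx ht (\col_(k < 2) (if k == ord0 then 1 else 0)).

Definition softmax_at {R : realType} (i : nat) (a : nat -> R) (j : nat) : R :=
  expR (a j) / \sum_(1 <= j' < i.+1) expR (a j').

Definition attn {R : realType} (M dTE : nat) (K Q : 'M[R]_(dTE + 2))
  (ht : nat -> 'cV[R]_dTE) (i j : nat) : R :=
  let q := fun t => rope M (dTE + 2) t *m (Q *m embed_h (ht t)) in
  let k := fun t => rope M (dTE + 2) t *m (K *m embed_h (ht t)) in
  softmax_at i (fun t => dotv (q i) (k t)) j.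
Arguments attn {R} M dTE K Q ht i j.

From HB Require Import structures.
From mathcomp Require Import all_boot all_order all_algebra.
From mathcomp Require Import all_classical all_reals all_analysis.
From mathcomp Require Import ring lra zify.
Set Implicit Arguments.
Unset Strict Implicit.
Unset Printing Implicit Defensive.

Import Order.TTheory GRing.Theory Num.Theory.
Local Open Scope ring_scope.

(* The rotary embedding rotates the last two coordinates of a vector of
   [R^(dTE + 2)] by the angle [t / M] (its slowest frequency), so we let the
   queries and keys live there.  Every key is [c (1, 0)], and the query of
   token [i] is the unit vector of angle [-1] when [ht i] does not contain
   [<x>] and of angle [- l / M] when it does; the logits are then
   [c cos ((i - t) / M - 1)] and [c cos ((i - t - l) / M)] respectively.  As
   all these angles stay in [[-1, 1]], the positions [1] and [i - l]
   respectively beat every other position by the margin [c (1 - cos (1 / M))],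
   and for [c] large the SoftMax concentrates on them. *)

Section Trigonometry.
Variable R : realType.

Lemma ler_cos (a b : R) : 0 <= a -> a <= b -> b <= pi -> cos b <= cos a.
Proof.
move=> a0 ab bpi; have := pi_ge2 R => pi2.
by rewrite leNgt ltr_cos ?in_itv /= -?leNgt ?a0 ?bpi //; apply/andP; split; lra.
Qed.

Lemma cos_lt1 (t : R) : 0 < t <= pi -> cos t < 1.
Proof.
by move=> /andP[t0 tpi]; rewrite -cos0 ltr_cos ?in_itv /= ?lexx ?pi_ge0 ?(ltW t0).
Qed.

Lemma one_sub_cos_le_sin (a : R) : 0 <= a <= pi / 2 -> 1 - cos a <= sin a.
Proof.
move=> /andP[a0 api]; have := pi_ge2 R => pi2.
have ca : 0 <= cos a by apply: cos_ge0_pihalf; apply/andP; split; lra.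
have sa : 0 <= sin a by apply: sin_ge0_pi; apply/andP; split; lra.
have := cos2Dsin2 a; have := cos_le1 a; nra.
Qed.

(* On [[0, 1]], [sin a * sin t >= (1 - cos a) * (1 - cos t)]. *)
Lemma cos_step_gap (a b t : R) :
  0 <= a -> 0 <= t -> a + t <= b -> b <= 1 -> cos b + (1 - cos t) <= cos a.
Proof.
move=> a0 t0 abt b1; have := pi_ge2 R => pi2.
have cb : cos b <= cos (a + t) by apply: ler_cos; lra.
have sa := @one_sub_cos_le_sin a; have st := @one_sub_cos_le_sin t.
have prod : (1 - cos a) * (1 - cos t) <= sin a * sin t.
  by apply: ler_pM; rewrite ?subr_ge0 ?cos_le1 ?sa ?st //; apply/andP; split; lra.
move: cb; rewrite cosD; nra.
Qed.

End Trigonometry.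

Section Softmax.
Variable R : realType.

Lemma mulr_expRN_div_lt (n y : R) : 0 <= n -> 0 < y -> n * expR (- (n / y)) < y.
Proof.
move=> n0 y0; rewrite expRN ltr_pdivrMr ?expR_gt0 //.
have := expR_ge1Dx (n / y).
by rewrite -(ler_pM2l y0) mulrDr mulr1 mulrCA divff ?mulr1 ?gt_eqF //; lra.
Qed.

Lemma softmax_at_gt (i j0 : nat) (a : nat -> R) (g : R) :
  (1 <= j0 <= i)%N ->
  (forall j, (1 <= j <= i)%N -> j != j0 -> a j + g <= a j0) ->
  1 - i%:R * expR (- g) < softmax_at i a j0.
Proof.
move=> j0i gap; rewrite /softmax_at (bigD1_seq j0) ?iota_uniq ?mem_index_iota //=.
set E := expR (a j0); set S := \sum_(_ <- _ | _) _; set z := expR (- g).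
have [E_gt0 z_gt0] : 0 < E /\ 0 < z by rewrite !expR_gt0.
have S_ge0 : 0 <= S by apply: sumr_ge0 => j _; exact/ltW/expR_gt0.
have iz_gt0 : 0 < i%:R * z by rewrite mulr_gt0 // ltr0n; lia.
have S_le : S <= i%:R * z * E.
  apply: (@le_trans _ _ (\sum_(1 <= j < i.+1 | j != j0) z * E)).
    rewrite /S big_nat_cond [leRHS]big_nat_cond.
    apply: ler_sum => j /andP[/andP[j1 ji] jj0].
    by rewrite /z /E -expRD ler_expR; have := gap j ltac:(lia) jj0; lra.
  apply: (@le_trans _ _ (\sum_(1 <= j < i.+1) z * E)).
    rewrite big_mkcond /=; apply: ler_sum_nat => j _.
    by case: ifP => _ //; rewrite mulr_ge0 // ltW.
  by rewrite sumr_const_nat subSS subn0 -mulrA mulr_natl.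
rewrite ltr_pdivlMr ?ltr_wpDr //.
have [iz_le1|iz_gt1] := lerP (i%:R * z) 1; last nra.
have : (1 - i%:R * z) * (E + S) <= (1 - i%:R * z) * ((1 + i%:R * z) * E).
  by apply: ler_wpM2l; lra.
have := mulr_gt0 (mulr_gt0 iz_gt0 iz_gt0) E_gt0; nra.
Qed.

End Softmax.

Section Vectors.
Variable R : realType.

Lemma dotvC n (u v : 'cV[R]_n) : dotv u v = dotv v u.
Proof. by apply: eq_bigr => k _; rewrite mulrC. Qed.

Lemma dotv0l n (v : 'cV[R]_n) : dotv 0 v = 0.
Proof. by rewrite /dotv big1 // => k _; rewrite mxE mul0r. Qed.

Lemma dotvZr n (c : R) (u v : 'cV[R]_n) : dotv u (c *: v) = c * dotv u v.
Proof. by rewrite /dotv mulr_sumr; apply: eq_bigr => k _; rewrite mxE mulrCA. Qed.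

Lemma dotv_col_mx m n (a c : 'cV[R]_m) (b d : 'cV[R]_n) :
  dotv (col_mx a b) (col_mx c d) = dotv a c + dotv b d.
Proof.
rewrite /dotv big_split_ord /=.
by congr (_ + _); apply: eq_bigr => k _; rewrite !(col_mxEu, col_mxEd).
Qed.

Lemma trmx_mul_dotv n (u v : 'cV[R]_n) : u^T *m v = (dotv u v)%:M.
Proof.
apply/matrixP => i j; rewrite !ord1 !mxE eqxx mulr1n.
by apply: eq_bigr => k _; rewrite mxE.
Qed.

Definition dir2 (phi : R) : 'cV[R]_2 :=
  \col_k (if k == ord0 then cos phi else sin phi).

Lemma dotv_dir2 (phi psi : R) : dotv (dir2 phi) (dir2 psi) = cos (phi - psi).
Proof. by rewrite /dotv !big_ord_recl big_ord0 !mxE /= cosB addr0. Qed.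

End Vectors.

Section RotaryHeads.
Variable R : realType.

Lemma rope_omega_last (M n : nat) :
  (0 < M)%N -> ~~ odd n -> rope_omega M (n + 2) ^+ (n./2).+1 = M%:R^-1 :> R.
Proof.
move=> M0 n_even; rewrite /rope_omega -powR_mulrn ?powR_ge0 // -powRrM.
have -> : - (2%:R / (n + 2)%:R) * (n./2).+1%:R = - 1 :> R.
  have -> : (n + 2)%:R = 2 * (n./2).+1%:R :> R.
    rewrite -natrM; congr (_%:R).
    by have := odd_double_half n; rewrite (negbTE n_even) add0n -muln2; lia.
  by field; rewrite nat1r pnatr_eq0.
by rewrite powRN powRr1 // ler0n.
Qed.

Lemma rope_col_mx0_dir2 (M n t : nat) (phi : R) : (0 < M)%N -> ~~ odd n ->
  rope M (n + 2) t *m col_mx 0 (dir2 phi) = col_mx 0 (dir2 (phi + t%:R / M%:R)).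
Proof.
move=> M0 n_even.
have half_n k : (k < 2)%N -> (n + k)./2 = n./2 by move=> ?; rewrite -!divn2; lia.
have odd_n k : odd (n + k) = odd k by rewrite oddD (negbTE n_even).
have last_block (k : 'I_(n + 2)) : (rope M (n + 2) t *m col_mx 0 (dir2 phi)) k 0 =
    \sum_(b < 2) rope M (n + 2) t k (rshift n b) * dir2 phi b 0.
  rewrite mxE big_split_ord /= big1 ?add0r => [|b _].
    by apply: eq_bigr => b _; rewrite col_mxEd.
  by rewrite col_mxEu [X in _ * X]mxE mulr0.
apply/matrixP => k j; rewrite (ord1 j) -[k](@splitK n 2) last_block.
rewrite !big_ord_recl big_ord0 addr0.
case: (fintype.split k) => {}k /=.
  rewrite col_mxEu !mxE /= !half_n //.
  have -> : (k./2 == n./2) = false.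
    by apply/negbTE; rewrite -!divn2; have := ltn_ord k; lia.
  by rewrite !mul0r addr0.
rewrite col_mxEd !mxE /= !half_n // !odd_n eqxx /= rope_omega_last //.
by case: k => [[|[|//]] ?] /=; rewrite ?(cosD, sinD) /=; ring.
Qed.

Lemma embed_h_dir2 n (h : 'cV[R]_n) : embed_h h = col_mx h (dir2 0).
Proof. by congr col_mx; apply/matrixP => k j; rewrite !mxE cos0 sin0; case: ifP. Qed.

Definition head_mx n (w : 'cV[R]_n) (p z : 'cV[R]_2) : 'M[R]_(n + 2) :=
  block_mx 0 0 (p *m w^T) (z *m (dir2 0)^T).

Lemma head_mx_embed n (w h : 'cV[R]_n) (p z : 'cV[R]_2) :
  head_mx w p z *m embed_h h = col_mx 0 (dotv w h *: p + z).
Proof.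
rewrite embed_h_dir2 mul_block_col !mul0mx addr0 -!mulmxA !trmx_mul_dotv.
by rewrite dotv_dir2 subrr cos0 !mul_mx_scalar scale1r.
Qed.

Definition key_mx n (c : R) : 'M[R]_(n + 2) := head_mx 0 0 (c *: dir2 0).

Definition query_mx n (w : 'cV[R]_n) (L : R) : 'M[R]_(n + 2) :=
  head_mx w (dir2 (- L) - dir2 (- 1)) (dir2 (- 1)).

Lemma dotv_rope_dir2 (M n i t : nat) (phi psi c : R) : (0 < M)%N -> ~~ odd n ->
  dotv (rope M (n + 2) i *m col_mx 0 (dir2 phi))
       (rope M (n + 2) t *m col_mx 0 (c *: dir2 psi)) =
  c * cos ((i%:R - t%:R) / M%:R + (phi - psi)).
Proof.
move=> M0 n_even.
rewrite -[X in col_mx X (c *: _)](scaler0 _ c) -scale_col_mx -scalemxAr.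
rewrite !rope_col_mx0_dir2 // dotvZr dotv_col_mx dotv0l add0r dotv_dir2.
by congr (_ * cos _); rewrite mulrBl; ring.
Qed.

Lemma attn_key_query_mx (M n : nat) (w : 'cV[R]_n) (ht : nat -> 'cV[R]_n)
    (L c : R) (i : nat) :
  (0 < M)%N -> ~~ odd n -> dotv w (ht i) = 0 \/ dotv w (ht i) = 1 ->
  attn M n (key_mx n c) (query_mx w L) ht i =
  softmax_at i (fun t =>
    c * cos ((i%:R - t%:R) / M%:R - (if dotv w (ht i) == 1 then L else 1))).
Proof.
move=> M0 n_even s01; apply/funext => j; rewrite /attn.
congr softmax_at; apply/funext => t.
rewrite !head_mx_embed dotv0l scale0r add0r.
case: s01 => ->; rewrite ?eqxx ?(eq_sym 0) ?oner_eq0 ?scale0r ?add0r ?scale1r ?subrK;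
by rewrite dotv_rope_dir2 // subr0.
Qed.

End RotaryHeads.

Section Concentration.
Variables (R : realType) (M i : nat) (c : R).
Hypotheses (i_gt0 : (0 < i)%N) (i_leM : (i <= M)%N) (c_ge0 : 0 <= c).

Lemma inv_M_bounds : [/\ 0 < M%:R^-1 :> R, M%:R * M%:R^-1 = 1 :> R & i%:R <= M%:R :> R].
Proof.
have th0 : 0 < M%:R^-1 :> R by rewrite invr_gt0 ltr0n (leq_trans i_gt0).
by split; rewrite ?ler_nat // mulfV // gt_eqF // -invr_gt0.
Qed.

Lemma softmax_first_token :
  1 - i%:R * expR (- (c * (1 - cos M%:R^-1))) <
  softmax_at i (fun t => c * cos ((i%:R - t%:R) / M%:R - 1)) 1.
Proof.
apply: softmax_at_gt => [|j /andP[j1 ji] j_ne1]; first by rewrite leqnn.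
rewrite -mulrDr ler_wpM2l // -cosN opprB -[cos (_ - 1)]cosN opprB.
have j2 : 2%:R <= j%:R :> R by rewrite ler_nat; lia.
have ji_R : j%:R <= i%:R :> R by rewrite ler_nat.
have [th0 Mth iM] := inv_M_bounds.
apply: cos_step_gap; nra.
Qed.

Lemma softmax_shifted_token (l : nat) : (l < i)%N ->
  1 - i%:R * expR (- (c * (1 - cos M%:R^-1))) <
  softmax_at i (fun t => c * cos ((i%:R - t%:R) / M%:R - l%:R / M%:R)) (i - l).
Proof.
move=> l_lti; apply: softmax_at_gt => [|j /andP[j1 ji] j_ne]; first lia.
rewrite -mulrDr ler_wpM2l // natrB ?(ltnW l_lti) // subKr subrr -cos_norm.
have [th0 Mth iM] := inv_M_bounds.
have [j0 l0] := (ler0n R j, ler0n R l).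
have [lt|gt] : (j + l < i)%N \/ (i < j + l)%N by move/eqP: j_ne; lia.
- have : (j + l).+1%:R <= i%:R :> R by rewrite ler_nat.
  rewrite -addn1 !natrD => jli.
  rewrite ger0_norm; last by nra.
  by apply: (@cos_step_gap _ 0); nra.
- have : i.+1%:R <= (j + l)%:R :> R by rewrite ler_nat.
  rewrite -addn1 !natrD => jli.
  have [ji_R li_R] : j%:R <= i%:R :> R /\ l%:R <= i%:R :> R.
    by rewrite !ler_nat ji ltnW.
  rewrite ler0_norm; last by nra.
  by apply: (@cos_step_gap _ 0); nra.
Qed.

End Concentration.

Theorem lemma6 (R : realType) (V dTE M : nat) (u : 'I_V -> 'cV[R]_dTE)
  (x : 'I_V) (l T : nat) (eps : R) :
  ~~ odd dTE ->
  (forall v w : 'I_V, dotv (u v) (u w) = (v == w)%:R) ->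
  (0 < M)%N -> (1 <= T)%N -> (T <= M)%N ->
  0 < eps < 1 ->
  exists K Q : 'M[R]_(dTE + 2),
    forall ht : nat -> 'cV[R]_dTE,
      (forall i : nat, (1 <= i <= T)%N ->
         exists lam : 'I_V -> R,
           (forall v, 0 <= lam v) /\ \sum_v lam v ^+ 2 = 1 /\
           ht i = \sum_v lam v *: u v) ->
      (forall i : nat, (1 <= i <= T)%N ->
         dotv (u x) (ht i) = 0 \/ dotv (u x) (ht i) = 1) ->
      (forall i : nat, (1 <= i <= T)%N -> (i <= l)%N -> dotv (u x) (ht i) = 0) ->
      forall i : nat, (1 <= i <= T)%N ->
        if dotv (ht i) (u x) == 1
        then attn M dTE K Q ht i (i - l)%N > 1 - eps
        else attn M dTE K Q ht i 1%N > 1 - eps.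
Proof.
move=> dTE_even _ M_gt0 _ T_leM /andP[eps_gt0 eps_lt1].
have pi2 := pi_ge2 R.
have th_le1 : M%:R^-1 <= 1 :> R by rewrite invf_le1 ?ler1n ?ltr0n.
set delta : R := 1 - cos M%:R^-1.
have delta_gt0 : 0 < delta.
  by rewrite subr_gt0 cos_lt1 // invr_gt0 ltr0n M_gt0 /=; lra.
set c : R := T%:R / eps / delta.
have c_ge0 : 0 <= c by rewrite !divr_ge0 // ltW.
have decay i : (i <= T)%N -> 1 - eps < 1 - i%:R * expR (- (c * delta)).
  move=> i_leT; rewrite ltrD2l ltrN2 divfK ?gt_eqF //.
  apply: le_lt_trans (mulr_expRN_div_lt (ler0n R T) eps_gt0).
  by rewrite ler_wpM2r ?ler_nat // ltW ?expR_gt0.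
exists (key_mx dTE c), (query_mx (u x) (l%:R / M%:R)).
move=> ht _ h01 h_pre i iT; have /andP[i_gt0 i_leT] := iT.
have i_leM := leq_trans i_leT T_leM.
have s01 := h01 i iT.
rewrite dotvC attn_key_query_mx //.
have [s|s] := s01; rewrite s ?eqxx ?(eq_sym 0) ?oner_eq0 /=.
  exact: lt_trans (decay _ i_leT) (softmax_first_token i_gt0 i_leM c_ge0).
have l_lt_i : (l < i)%N.
  by rewrite ltnNge; apply/negP => /(h_pre i iT); rewrite s => /eqP; rewrite oner_eq0.
exact: lt_trans (decay _ i_leT) (softmax_shifted_token i_gt0 i_leM c_ge0 l_lt_i).
Qed.
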